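(* Let $P:\{-1,1\}^k\to\{0,1\}$ be a predicate such that there is no uniformly positively correlated probability distribution supported on $P^{-1}(1)$. Then there is a real polynomial $Q$ of degree at most $2$ in $x_1,\dots,x_k$ such that $Q(x)>E_Q^+$ for every $x\in P^{-1}(1)$. Furthermore, $Q$ can be chosen such that the maximum defining $E_Q^+$ is attained at a bias $r$ with $|r|<1$.
   Context: Boolean values are encoded as $\pm1$. For $Q:\{-1,1\}^k\to\mathbb{R}$ and $r\in[-1,1]$, $E_Q(r)=\mathbb{E}[Q(x)]$ where $x$ has independent coordinates each with expectation $r$ (i.e., $x_i=1$ with probability $(1+r)/2$), and $E_Q^+=\max_{r\in[-1,1]}E_Q(r)$. A distribution on $\{-1,1\}^k$ is uniformly positively correlated if there are $p,\rho\in[0,1]$ with $\rho\ge p^2$ such that $\Pr[x_i=1]=p$ for every $i$ and $\Pr[x_i=1\wedge x_j=1]=\rho$ for every $i<j$. *)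

From mathcomp Require Import all_boot all_order all_algebra.
From mathcomp Require Import reals.
Set Implicit Arguments. Unset Strict Implicit. Unset Printing Implicit Defensive.
Import Order.TTheory GRing.Theory Num.Theory.
Local Open Scope ring_scope.

(* The Boolean cube {-1,1}^k: a point is a finite function 'I_k -> bool,
   where true encodes +1 and false encodes -1. *)
Definition cube (k : nat) := {ffun 'I_k -> bool}.

Definition pm (R : ringType) (b : bool) : R := if b then 1 else -1.

Definition deg_le2 (R : ringType) (k : nat) (Q : cube k -> R) : Prop :=
  exists (c : R) (a : 'I_k -> R) (B : 'I_k -> 'I_k -> R),
    forall x : cube k,
      Q x = c + \sum_(i < k) a i * pm R (x i)
              + \sum_(i < k) \sum_(j < k) B i j * pm R (x i) * pm R (x j).

Definition biasprob (R : fieldType) (k : nat) (r : R) (x : cube k) : R :=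
  \prod_(i < k) (if x i then (1 + r) / 2 else (1 - r) / 2).

Definition EQ (R : fieldType) (k : nat) (Q : cube k -> R) (r : R) : R :=
  \sum_(x : cube k) biasprob r x * Q x.

Definition upc_supported (R : realFieldType) (k : nat) (P : cube k -> bool)
    (mu : cube k -> R) : Prop :=
  (forall x, 0 <= mu x) /\ \sum_(x : cube k) mu x = 1 /\
  (forall x, mu x != 0 -> P x) /\
  exists p rho : R,
    [/\ 0 <= p <= 1, 0 <= rho <= 1, p ^+ 2 <= rho,
        (forall i : 'I_k, \sum_(x : cube k | x i) mu x = p) &
        (forall i j : 'I_k, (i < j)%N -> \sum_(x : cube k | x i && x j) mu x = rho)].

From mathcomp Require Import all_boot all_order all_algebra.
From mathcomp Require Import reals.
From mathcomp Require Import all_classical all_reals all_analysis.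
From mathcomp Require Import ring lra.
Set Implicit Arguments. Unset Strict Implicit. Unset Printing Implicit Defensive.
Import Order.TTheory GRing.Theory Num.Theory.
Import numFieldNormedType.Exports.
Local Open Scope ring_scope.

(* Write s = 2p - 1 and v = 4 rho - 4p + 1 for the common first and second
   moments E[x_i] and E[x_i x_j]; then rho >= p^2 becomes v >= s^2, and the
   hypothesis says that no distribution on P^-1(1) has all its moments equal to
   a point (s, v) of the parabolic region v >= s^2.  Minimise the squared
   distance between the moment vector of such a distribution and the target
   (s, .., s, v, .., v) over a compact convex set of triples (mu, s, v); the
   minimum is positive.  Its first-order condition, tested against point masses
   and against moving (s, v) alone, shows that the gap vector w defines a
   quadratic Q with Q > A s0 + B v0 >= A s + B v on P^-1(1), where (s0, v0) is
   the optimal target and A, B are the sums of the linear and quadratic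
   coefficients of Q; since
   E_Q(r) = A r + B r^2 corresponds to (s, v) = (r, r^2), this is the claim.
   Letting s range over [-2, 2] rather than [-1, 1] keeps the maximiser of
   E_Q away from the endpoints. *)

Section RealFacts.
Variable R : realFieldType.

Lemma first_order_ge0 (L M : R) : 0 <= M ->
  (forall t : R, 0 < t <= 1 -> 0 <= 2 * L + t * M) -> 0 <= L.
Proof.
move=> M_ge0 slope; rewrite leNgt; apply/negP => L_lt0.
pose t := Num.min 1 (- L / (M + 1)).
have t_gt0 : 0 < t by rewrite lt_min ltr01 divr_gt0 //; lra.
have tM : t * M < - L.
  have : t * (M + 1) <= - L by rewrite -ler_pdivlMr ?ge_min ?lexx ?orbT //; lra.
  nra.
have := slope t; rewrite t_gt0 ge_min lexx /= => /(_ isT); lra.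
Qed.

Lemma sqnorm_min_first_order (I : finType) (T : Type) (D : T -> Prop)
    (y : T -> I -> R) (a0 : T) :
  (forall a, D a -> forall t : R, 0 < t <= 1 ->
     exists2 b, D b & forall i, y b i = y a0 i + t * (y a i - y a0 i)) ->
  (forall b, D b -> \sum_i y a0 i ^+ 2 <= \sum_i y b i ^+ 2) ->
  forall a, D a -> 0 <= \sum_i y a0 i * (y a i - y a0 i).
Proof.
move=> convexD minD a Da.
apply: (@first_order_ge0 _ (\sum_i (y a i - y a0 i) ^+ 2)) => [|t t01].
  by apply: sumr_ge0 => i _; exact: sqr_ge0.
have [b Db ybE] := convexD a Da t t01.
have expand : \sum_i y b i ^+ 2 = \sum_i y a0 i ^+ 2 +
    t * (2 * \sum_i y a0 i * (y a i - y a0 i) + t * \sum_i (y a i - y a0 i) ^+ 2).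
  rewrite !mulr_sumr -big_split /= mulr_sumr -big_split.
  by apply: eq_bigr => i _ /=; rewrite ybE; ring.
have := minD b Db; rewrite expand lerDl.
by case/andP: t01 => t_gt0 _; rewrite pmulr_rge0.
Qed.

Lemma quadratic_argmax_interior (A B s0 v0 : R) :
  -2 <= s0 <= 2 -> s0 ^+ 2 <= v0 <= 5 ->
  (s0 <= -1 -> 0 <= A) -> (1 <= s0 -> A <= 0) -> (1 <= v0 -> B <= 0) ->
  (forall s v : R, -2 <= s <= 2 -> s ^+ 2 <= v <= 5 -> A * s + B * v <= A * s0 + B * v0) ->
  exists2 r0, -1 < r0 < 1 &
    forall r : R, -1 <= r <= 1 -> A * r + B * r ^+ 2 <= A * r0 + B * r0 ^+ 2.
Proof.
move=> /andP[s0_ge s0_le] /andP[v0_ge v0_le] A_ge0 A_le0 B_le0_v0 top.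
have top_sq r : -2 <= r <= 2 -> A * r + B * r ^+ 2 <= A * s0 + B * v0.
  by case/andP=> r_ge r_le; apply: top; apply/andP; split; nra.
have B_le0 : B <= 0.
  have [/B_le0_v0 //|v0_lt1] := lerP 1 v0.
  have := top s0 5; rewrite s0_ge s0_le; nra.
have [B_lt0|B_ge0] := ltrP B 0.
  have v0E : v0 = s0 ^+ 2.
    have := top s0 (s0 ^+ 2); rewrite s0_ge s0_le lexx; nra.
  have top0 := top_sq 0; rewrite mulr0 expr0n /= mulr0 addr0 in top0.
  have {}top0 := top0 ltac:(lra).
  exists s0; last by move=> r r_in; rewrite -v0E; apply: top_sq; lra.
  rewrite v0E in top0.
  apply/andP; split; rewrite ltNge; apply/negP => s0_out;
    have s0_sq : 1 <= s0 ^+ 2 by nra.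
    by have := A_ge0 s0_out; nra.
  by have := A_le0 s0_out; nra.
have B0 : B = 0 by lra.
have A0 : A = 0.
  have := top 2 5; have := top (-2) 5; rewrite B0 !mul0r !addr0.
  move=> /(_ ltac:(lra) ltac:(lra)) top_m /(_ ltac:(lra) ltac:(lra)) top_p.
  have [A_lt0|A_ge0'] := ltrP A 0; first by have := A_ge0 ltac:(nra); lra.
  have [A_gt0|] := ltrP 0 A; last lra.
  by have := A_le0 ltac:(nra); lra.
by exists 0; [lra | move=> r _; rewrite A0 B0 !mul0r addr0].
Qed.

Lemma convex_itv (a b x y t : R) : a <= x <= b -> a <= y <= b -> 0 <= t <= 1 ->
  a <= x + t * (y - x) <= b.
Proof. by move=> /andP[? ?] /andP[? ?] /andP[? ?]; apply/andP; split; nra. Qed.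

Lemma parabola_clamp (s v : R) : s ^+ 2 <= v ->
  exists s' v' : R, [/\ -1 <= s' <= 1, s' ^+ 2 <= v' <= 1,
    (-1 <= s <= 1 -> s' = s) & (v <= 1 -> v' = v)].
Proof.
move=> s2v; have [v_le1|v_gt1] := lerP v 1.
  have s_sq : s ^+ 2 <= 1 by lra.
  exists s, v; split => //; last by apply/andP; split.
  by apply/andP; split; rewrite leNgt; apply/negP => ?; nra.
exists (if -1 <= s <= 1 then s else 0), 1; split.
- by case: ifP => // _; lra.
- by case: ifP => [/andP[? ?]|_]; apply/andP; split; nra.
- by move=> ->.
- lra.
Qed.

End RealFacts.

Section BiasedMoments.
Variables (R : numFieldType) (k : nat).

Lemma sum_biasprob_prod (r : R) (h : 'I_k -> bool -> R) :
  \sum_(x : cube k) biasprob r x * \prod_i h i (x i) =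
  \prod_i ((1 + r) / 2 * h i true + (1 - r) / 2 * h i false).
Proof.
transitivity (\prod_i \sum_(b : bool) ((if b then (1 + r) / 2 else (1 - r) / 2) * h i b)).
  by rewrite bigA_distr_bigA /=; apply: eq_bigr => x _; rewrite -big_split.
by apply: eq_bigr => i _; rewrite big_bool.
Qed.

Lemma biasprob_prod_pm (r : R) (S : {set 'I_k}) :
  \sum_(x : cube k) biasprob r x * \prod_(i in S) pm R (x i) = r ^+ #|S|.
Proof.
rewrite -prodr_const [RHS]big_mkcond /=.
rewrite (eq_bigr (fun x : cube k => biasprob r x * \prod_i (if i \in S then pm R (x i) else 1))); last first.
  by move=> x _; rewrite big_mkcond.
rewrite (sum_biasprob_prod r (fun i b => if i \in S then pm R b else 1)).
by apply: eq_bigr => i _; case: (i \in S); rewrite /pm; field.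
Qed.

Lemma biasprob_pm (r : R) (i : 'I_k) :
  \sum_(x : cube k) biasprob r x * pm R (x i) = r.
Proof.
transitivity (\sum_(x : cube k) biasprob r x * \prod_(l in [set i]) pm R (x l)).
  by apply: eq_bigr => x _; rewrite big_set1.
by rewrite biasprob_prod_pm cards1 expr1.
Qed.

Lemma biasprob_pm2 (r : R) (i j : 'I_k) : i != j ->
  \sum_(x : cube k) biasprob r x * (pm R (x i) * pm R (x j)) = r ^+ 2.
Proof.
move=> ij.
transitivity (\sum_(x : cube k) biasprob r x * \prod_(l in [set i; j]) pm R (x l)).
  by apply: eq_bigr => x _; rewrite big_setU1 ?inE // big_set1.
by rewrite biasprob_prod_pm cards2 ij.
Qed.

End BiasedMoments.

Section Moments.
Variables (R : realFieldType) (k : nat) (P : cube k -> bool).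

(* Features of degree one ([inl i]) and two ([inr (i, j)], [i < j]); the
   remaining pairs are dummy coordinates on which everything vanishes. *)
Local Notation feature := ('I_k + 'I_k * 'I_k)%type.

Definition monomial (f : feature) (x : cube k) : R :=
  match f with
  | inl i => pm R (x i)
  | inr (i, j) => if (i < j)%N then pm R (x i) * pm R (x j) else 0
  end.

Definition target (s v : R) (f : feature) : R :=
  match f with
  | inl _ => s
  | inr (i, j) => if (i < j)%N then v else 0
  end.

Definition moment (mu : cube k -> R) (f : feature) : R :=
  \sum_(x : cube k) mu x * monomial f x.

Definition gap (mu : cube k -> R) (s v : R) (f : feature) : R :=
  moment mu f - target s v f.

Definition quadform (w : feature -> R) (x : cube k) : R :=
  \sum_(f : feature) w f * monomial f x.

Definition lin_coef (w : feature -> R) : R := \sum_(i : 'I_k) w (inl i).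

Definition quad_coef (w : feature -> R) : R :=
  \sum_(p : 'I_k * 'I_k | (p.1 < p.2)%N) w (inr p).

Definition point_mass (x : cube k) : cube k -> R := fun y => (y == x)%:R.

Definition feasible (mu : cube k -> R) (s v : R) : Prop :=
  [/\ forall x, 0 <= mu x, forall x, ~~ P x -> mu x = 0,
      \sum_(x : cube k) mu x = 1, -2 <= s <= 2 & s ^+ 2 <= v <= 5].

Lemma monomial_bound f x : -1 <= monomial f x <= 1.
Proof.
have pm_bound b : -1 <= pm R b <= 1 by case: b; rewrite /pm; apply/andP; split; lra.
case: f => [i|[i j]] /=; first exact: pm_bound.
case: ifP => _; last by apply/andP; split; lra.
by case: (x i); case: (x j); rewrite /pm ?mulr1 ?mulrN1 ?opprK; apply/andP; split; lra.
Qed.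

Lemma moment_bound mu f : (forall x, 0 <= mu x) -> \sum_(x : cube k) mu x = 1 ->
  -1 <= moment mu f <= 1.
Proof.
move=> mu_ge0 mu_sum1; rewrite -mu_sum1 -sumrN /moment.
apply/andP; split; apply: ler_sum => x _;
  have /andP[? ?] := monomial_bound f x; have := mu_ge0 x; nra.
Qed.

Lemma moment_point_mass x f : moment (point_mass x) f = monomial f x.
Proof.
rewrite /moment (bigD1 x) //= /point_mass eqxx mul1r big1 ?addr0 // => y /negbTE ->.
by rewrite mul0r.
Qed.

Lemma mass_coord mu i :
  \sum_(x : cube k | x i) mu x = (\sum_(x : cube k) mu x + moment mu (inl i)) / 2.
Proof.
rewrite /moment -big_split /= mulr_suml big_mkcond /=; apply: eq_bigr => x _.
by case: (x i); rewrite /pm; field.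
Qed.

Lemma mass_pair mu (i j : 'I_k) : (i < j)%N ->
  \sum_(x : cube k | x i && x j) mu x = (\sum_(x : cube k) mu x +
    moment mu (inl i) + moment mu (inl j) + moment mu (inr (i, j))) / 4.
Proof.
move=> ij; rewrite /moment -!big_split /= mulr_suml big_mkcond /=.
by apply: eq_bigr => x _; rewrite ij; case: (x i); case: (x j); rewrite /pm /=; field.
Qed.

Lemma upc_of_gap0 mu s v : feasible mu s v -> (forall f, gap mu s v f = 0) ->
  upc_supported P mu.
Proof.
case=> mu_ge0 mu_supp mu_sum1 _ /andP[s2v _].
have [s' [v' [/andP[s'_ge s'_le] /andP[s'v' v'_le] s'E v'E]]] := parabola_clamp s2v.
have p_in : 0 <= (1 + s') / 2 <= 1 by apply/andP; split; lra.
have rho_in : 0 <= (1 + 2 * s' + v') / 4 <= 1.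
  by have := sqr_ge0 (1 + s'); rewrite sqrrD expr1n mul1r => ?; apply/andP; split; lra.
have p2_le_rho : ((1 + s') / 2) ^+ 2 <= (1 + 2 * s' + v') / 4.
  rewrite -subr_ge0.
  have -> : (1 + 2 * s' + v') / 4 - ((1 + s') / 2) ^+ 2 = (v' - s' ^+ 2) / 4 by field.
  by apply: divr_ge0; lra.
move=> gap0.
have momentE f : moment mu f = target s v f.
  by apply/eqP; rewrite -subr_eq0 -[_ - _]/(gap mu s v f) gap0.
have s_coord (i : 'I_k) : s' = s.
  by apply: s'E; have := moment_bound (inl i) mu_ge0 mu_sum1; rewrite momentE.
have v_pair (i j : 'I_k) : (i < j)%N -> v' = v.
  move=> ij; apply: v'E; have := moment_bound (inr (i, j)) mu_ge0 mu_sum1.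
  by rewrite momentE /= ij => /andP[].
do 2!split => //; split; first by move=> x; apply: contraNT => /mu_supp ->.
exists ((1 + s') / 2), ((1 + 2 * s' + v') / 4); split => //.
- by move=> i; rewrite mass_coord mu_sum1 momentE (s_coord i).
- move=> i j ij; rewrite mass_pair // mu_sum1 !momentE /= ij.
  by rewrite (s_coord i) (v_pair i j ij); congr (_ / _); ring.
Qed.

Lemma feasible_point_mass x s v : P x -> -2 <= s <= 2 -> s ^+ 2 <= v <= 5 ->
  feasible (point_mass x) s v.
Proof.
move=> Px s_in v_in; split => //.
- by move=> y; rewrite /point_mass; case: eqP => // ->; rewrite Px.
- by rewrite (bigD1 x) //= /point_mass eqxx big1 ?addr0 // => y /negbTE ->.
Qed.

Lemma feasible_comb mu0 s0 v0 mu s v t :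
  feasible mu0 s0 v0 -> feasible mu s v -> 0 <= t <= 1 ->
  feasible (fun x => mu0 x + t * (mu x - mu0 x)) (s0 + t * (s - s0)) (v0 + t * (v - v0)).
Proof.
move=> [ge0 supp sum1 s0_in /andP[v0_ge v0_le]] [ge0' supp' sum1' s_in /andP[v_ge v_le]].
move=> t_in; have /andP[t_ge0 t_le1] := t_in.
split.
- by move=> x; have := ge0 x; have := ge0' x; nra.
- by move=> x Px; rewrite supp // supp' // subrr mulr0 addr0.
- by rewrite big_split /= -mulr_sumr sumrB sum1 sum1'; ring.
- exact: convex_itv.
- have convex_sq : (s0 + t * (s - s0)) ^+ 2 <= (1 - t) * s0 ^+ 2 + t * s ^+ 2.
    suff : 0 <= t * (1 - t) * (s - s0) ^+ 2 by nra.
    by apply: mulr_ge0; [apply: mulr_ge0 => //; lra | exact: sqr_ge0].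
  by apply/andP; split; nra.
Qed.

Lemma gap_comb mu0 s0 v0 mu s v t f :
  gap (fun x => mu0 x + t * (mu x - mu0 x)) (s0 + t * (s - s0)) (v0 + t * (v - v0)) f =
  gap mu0 s0 v0 f + t * (gap mu s v f - gap mu0 s0 v0 f).
Proof.
have moment_comb : moment (fun x => mu0 x + t * (mu x - mu0 x)) f =
    moment mu0 f + t * (moment mu f - moment mu0 f).
  by rewrite /moment -sumrB mulr_sumr -big_split; apply: eq_bigr => x _ /=; ring.
by rewrite /gap moment_comb; case: {moment_comb}f => [i|[i j]] /=; try case: ifP => _; ring.
Qed.

Lemma target_sum w s v :
  \sum_(f : feature) w f * target s v f = lin_coef w * s + quad_coef w * v.
Proof.
rewrite big_sumType /= /lin_coef /quad_coef !mulr_suml; congr (_ + _).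
rewrite [RHS]big_mkcond /=; apply: eq_bigr => -[i j] _ /=.
by case: ifP => _; rewrite ?mulr0 ?mul0r.
Qed.

Lemma biasprob_monomial (r : R) f :
  \sum_(x : cube k) biasprob r x * monomial f x = target r (r ^+ 2) f.
Proof.
case: f => [i|[i j]] /=; first exact: biasprob_pm.
case: ifP => ij; last by rewrite big1 // => x _; rewrite mulr0.
by apply: biasprob_pm2; rewrite neq_ltn ij.
Qed.

Lemma EQ_quadform w r :
  EQ (quadform w) r = lin_coef w * r + quad_coef w * r ^+ 2.
Proof.
rewrite /EQ /quadform -target_sum.
under eq_bigr do rewrite mulr_sumr.
rewrite exchange_big; apply: eq_bigr => f _ /=.
by rewrite -biasprob_monomial mulr_sumr; apply: eq_bigr => x _; rewrite mulrCA.
Qed.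

Lemma quadform_deg_le2 w : deg_le2 (quadform w).
Proof.
exists 0, (fun i => w (inl i)), (fun i j : 'I_k => if (i < j)%N then w (inr (i, j)) else 0).
move=> x; rewrite add0r /quadform big_sumType /= pair_bigA /=; congr (_ + _).
by apply: eq_bigr => -[i j] _ /=; case: ifP => _; rewrite ?mulr0 ?mul0r // mulrA.
Qed.

Lemma lin_coef_gap_ge0 mu s v : (forall x, 0 <= mu x) -> \sum_(x : cube k) mu x = 1 ->
  s <= -1 -> 0 <= lin_coef (gap mu s v).
Proof.
move=> mu_ge0 mu_sum1 s_le; apply: sumr_ge0 => i _ /=.
by have /andP[? _] := moment_bound (inl i) mu_ge0 mu_sum1; rewrite /gap /= subr_ge0; lra.
Qed.

Lemma lin_coef_gap_le0 mu s v : (forall x, 0 <= mu x) -> \sum_(x : cube k) mu x = 1 ->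
  1 <= s -> lin_coef (gap mu s v) <= 0.
Proof.
move=> mu_ge0 mu_sum1 s_ge; apply: sumr_le0 => i _ /=.
by have /andP[_ ?] := moment_bound (inl i) mu_ge0 mu_sum1; rewrite /gap /= subr_le0; lra.
Qed.

Lemma quad_coef_gap_le0 mu s v : (forall x, 0 <= mu x) -> \sum_(x : cube k) mu x = 1 ->
  1 <= v -> quad_coef (gap mu s v) <= 0.
Proof.
move=> mu_ge0 mu_sum1 v_ge; apply: sumr_le0 => -[i j] /= ij.
have /andP[_ ?] := moment_bound (inr (i, j)) mu_ge0 mu_sum1.
by rewrite /gap /= ij subr_le0; lra.
Qed.

Lemma gap_sqnorm_gt0 mu s v : feasible mu s v ->
  ~ (exists nu : cube k -> R, upc_supported P nu) -> 0 < \sum_(f : feature) gap mu s v f ^+ 2.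
Proof.
move=> Fmu no_upc; rewrite lt_def sumr_ge0 ?andbT => [|f _]; last exact: sqr_ge0.
apply/eqP => /psumr_eq0P gap0; apply: no_upc; exists mu.
apply: upc_of_gap0 Fmu _ => f; apply/eqP; rewrite -sqrf_eq0.
by rewrite gap0 // => g _; exact: sqr_ge0.
Qed.

Section Optimum.
Variables (mu0 : cube k -> R) (s0 v0 : R).
Hypothesis feasible0 : feasible mu0 s0 v0.
Hypothesis gap_min : forall mu s v, feasible mu s v ->
  \sum_(f : feature) gap mu0 s0 v0 f ^+ 2 <= \sum_(f : feature) gap mu s v f ^+ 2.
Local Notation w := (gap mu0 s0 v0).

Lemma gap_first_order mu s v : feasible mu s v ->
  0 <= \sum_(f : feature) w f * (gap mu s v f - w f).
Proof.
move=> Fmu.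
pose D (a : (cube k -> R) * R * R) := feasible a.1.1 a.1.2 a.2.
pose y (a : (cube k -> R) * R * R) := gap a.1.1 a.1.2 a.2.
apply: (@sqnorm_min_first_order _ _ _ D y (mu0, s0, v0) _ _ (mu, s, v)) => //.
- move=> [[mu1 s1] v1] F1 t /andP[t_gt0 t_le1].
  exists (fun x => mu0 x + t * (mu1 x - mu0 x), s0 + t * (s1 - s0), v0 + t * (v1 - v0)).
    by apply: feasible_comb => //; rewrite t_le1 ltW.
  by move=> f; exact: gap_comb.
- by move=> [[mu1 s1] v1]; exact: gap_min.
Qed.

Lemma lin_le_opt s v : -2 <= s <= 2 -> s ^+ 2 <= v <= 5 ->
  lin_coef w * s + quad_coef w * v <= lin_coef w * s0 + quad_coef w * v0.
Proof.
move=> s_in v_in; case: (feasible0) => ge0 supp sum1 _ _.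
have := gap_first_order (And5 ge0 supp sum1 s_in v_in).
rewrite (eq_bigr (fun f => w f * target s0 v0 f - w f * target s v f)); last first.
  by move=> f _; rewrite /gap; ring.
by rewrite sumrB !target_sum subr_ge0.
Qed.

Lemma quadform_gt_opt x : P x -> 0 < \sum_(f : feature) w f ^+ 2 ->
  lin_coef w * s0 + quad_coef w * v0 < quadform w x.
Proof.
move=> Px w_gt0; case: (feasible0) => _ _ _ s0_in v0_in.
have := gap_first_order (feasible_point_mass Px s0_in v0_in).
rewrite (eq_bigr (fun f => w f * monomial f x - w f ^+ 2 - w f * target s0 v0 f)); last first.
  by move=> f _; rewrite /gap moment_point_mass; ring.
rewrite !sumrB target_sum -/(quadform w x); lra.
Qed.

End Optimum.

End Moments.

Section Compactness.
Local Open Scope classical_set_scope.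
Import ArrowAsProduct.
Variable R : realType.

Section RealValued.
Variable T : topologicalType.
Implicit Types f g : T -> R.

Lemma continuous_subr f g : continuous f -> continuous g ->
  continuous (fun t => f t - g t).
Proof. by move=> cf cg t; exact: (continuousB (cf t) (cg t)). Qed.

Lemma continuous_mulr f g : continuous f -> continuous g ->
  continuous (fun t => f t * g t).
Proof. by move=> cf cg t; exact: (continuousM (cf t) (cg t)). Qed.

Lemma continuous_sqr f : continuous f -> continuous (fun t => f t ^+ 2).
Proof. by move=> cf; under eq_fun do rewrite expr2; exact: continuous_mulr. Qed.

Lemma continuous_sum (I : Type) (r : seq I) (F : I -> T -> R) :
  (forall i, continuous (F i)) -> continuous (fun t => \sum_(i <- r) F i t).
Proof.
move=> cF; elim: r => [|i r IH].
  by under eq_fun do rewrite big_nil; exact: cst_continuous.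
under eq_fun do rewrite big_cons.
by move=> t; exact: (continuousD (cF i t) (IH t)).
Qed.

End RealValued.

Variables (k : nat) (P : cube k -> bool).

(* A triple [(mu, s, v)] is encoded as [c] with [c (inl x) = mu x],
   [c (inr false) = s] and [c (inr true) = v]. *)
Local Notation encoded_feasible :=
  [set c : cube k + bool -> R | feasible P (fun x => c (inl x)) (c (inr false)) (c (inr true))].

Lemma continuous_coord (j : cube k + bool) : continuous (fun c : cube k + bool -> R => c j).
Proof. by move=> c; exact: (@proj_continuous _ (fun _ => R) j c). Qed.

Lemma compact_feasible : compact encoded_feasible.
Proof.
pose box (j : cube k + bool) : set R := match j with
  | inl x => if P x then `[0, 1] else `[0, 0]
  | inr true => `[0, 5]
  | inr false => `[-2, 2] end.
have -> : encoded_feasible = [set c | forall j, box j (c j)] `&`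
    ((fun c => \sum_(x : cube k) c (inl x)) @^-1` [set y | y = 1] `&`
     (fun c => c (inr true) - c (inr false) ^+ 2) @^-1` [set y | 0 <= y]).
  apply/seteqP; split => c /=.
  - case=> ge0 supp sum1 s_in /andP[sv v_le]; split; last by split => //; rewrite subr_ge0.
    have sq := sqr_ge0 (c (inr false)).
    case=> [x|[]] /=; rewrite ?in_itv /=; last exact: s_in.
    + case: ifPn => Px; rewrite /= in_itv /=; last by rewrite supp // lexx.
      by rewrite ge0 -sum1 (bigD1 x) //= lerDl sumr_ge0.
    + by apply/andP; split => //; lra.
  - move=> [box_c [sum1 /= sv]]; rewrite subr_ge0 in sv.
    have := box_c (inr true); have := box_c (inr false); rewrite /= !in_itv /=.
    move=> s_in /andP[_ v_le]; split => // [x|x /negbTE Px|]; last exact/andP.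
      by have := box_c (inl x); rewrite /=; case: (P x); rewrite /= in_itv => /andP[].
    have := box_c (inl x); rewrite /= Px /= in_itv /= => mu_x0.
    by apply/eqP; rewrite eq_le andbC.
apply: compact_closedI.
  apply: (@tychonoff _ (fun _ => R)) => -[x|[]] /=; last 2 first.
  - exact: segment_compact.
  - exact: segment_compact.
  by case: (P x); exact: segment_compact.
apply: closedI; apply: preimage_closed; try exact: closed_eq; try exact: closed_ge.
- by move=> c _; move: c; apply: continuous_sum => x; exact: continuous_coord.
- move=> c _; move: c.
  by apply: continuous_subr; [|apply: continuous_sqr]; exact: continuous_coord.
Qed.

Lemma continuous_gap_sqnorm :
  continuous (fun c : cube k + bool -> R => \sum_(f : 'I_k + 'I_k * 'I_k)
    gap (fun x => c (inl x)) (c (inr false)) (c (inr true)) f ^+ 2).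
Proof.
have continuous_target (f : 'I_k + 'I_k * 'I_k) :
    continuous (fun c : cube k + bool -> R => target (c (inr false)) (c (inr true)) f).
  case: f => [i|[i j]] /=; first exact: continuous_coord.
  by case: (i < j)%N; [exact: continuous_coord | exact: cst_continuous].
apply: continuous_sum => f; apply: continuous_sqr; apply: continuous_subr => //.
apply: continuous_sum => x; apply: continuous_mulr; first exact: continuous_coord.
exact: cst_continuous.
Qed.

Lemma exists_gap_min : (exists x, P x) ->
  exists (mu0 : cube k -> R) (s0 v0 : R), feasible P mu0 s0 v0 /\
    forall mu s v, feasible P mu s v ->
      \sum_(f : 'I_k + 'I_k * 'I_k) gap mu0 s0 v0 f ^+ 2 <=
      \sum_(f : 'I_k + 'I_k * 'I_k) gap mu s v f ^+ 2.
Proof.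
case=> x0 Px0.
pose encode (mu : cube k -> R) (s v : R) (j : cube k + bool) : R :=
  match j with inl x => mu x | inr b => if b then v else s end.
have feasible_x0 : encoded_feasible (encode (point_mass R x0) 0 0).
  by apply: feasible_point_mass => //; rewrite ?expr0n /=; apply/andP; split; lra.
have [c /set_mem Fc c_min] := compact_EVT_min (ex_intro _ _ feasible_x0)
  compact_feasible (continuous_subspaceT continuous_gap_sqnorm).
exists (fun x => c (inl x)), (c (inr false)), (c (inr true)); split => // mu s v Fmu.
exact: (c_min (encode mu s v) (mem_set Fmu)).
Qed.

End Compactness.

Theorem theorem6p4 (R : realType) (k : nat) (P : cube k -> bool) :
  ~ (exists mu : cube k -> R, upc_supported P mu) ->
  exists Q : cube k -> R, deg_le2 Q /\
    exists r0 : R,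
      [/\ -1 < r0 < 1,
          (* E_Q^+ = max_{r in [-1,1]} E_Q(r) is attained at r0 *)
          (forall r : R, -1 <= r <= 1 -> EQ Q r <= EQ Q r0) &
          (forall x : cube k, P x -> EQ Q r0 < Q x)].
Proof.
move=> no_upc.
have [/(@exists_gap_min R k P)[mu0 [s0 [v0 [F0 gap_min]]]]|no_P] :=
  pselect (exists x, P x); last first.
  exists (quadform (fun _ : 'I_k + 'I_k * 'I_k => 0 : R)).
  split; first exact: quadform_deg_le2.
  exists 0; split=> [|r _|x Px]; first lra; last by case: no_P; exists x.
  by rewrite !EQ_quadform /lin_coef /quad_coef !big1 // !mul0r.
have w_gt0 := gap_sqnorm_gt0 F0 no_upc.
case: (F0) => mu0_ge0 _ mu0_sum1 s0_in v0_in.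
have [r0 r0_in r0_max] := quadratic_argmax_interior s0_in v0_in
  (lin_coef_gap_ge0 v0 mu0_ge0 mu0_sum1) (lin_coef_gap_le0 v0 mu0_ge0 mu0_sum1)
  (quad_coef_gap_le0 s0 mu0_ge0 mu0_sum1) (lin_le_opt F0 gap_min).
exists (quadform (gap mu0 s0 v0)); split; first exact: quadform_deg_le2.
exists r0; split=> // [r r_in|x Px]; rewrite !EQ_quadform; first exact: r0_max.
apply: le_lt_trans (quadform_gt_opt F0 gap_min Px w_gt0).
have /andP[r0_gt r0_lt] := r0_in.
by apply: (lin_le_opt F0 gap_min); apply/andP; split; nra.
Qed.
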